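(* In the Cross Model on the strip $\mathbb{Z}_K$ (with $K\ge1$ an integer and $\varepsilon\in(0,1)$), the processes $(\mathbf{D}^{K,d}_i)_{i\ge0}$ and $(\mathbf{Y}_i)_{i\ge0}$ are Markov chains. Moreover, $(\mathbf{Y}_i)_{i\ge0}$ has the law of the discrete-time synchronous TASEP on $[\![-K+1,K]\!]$ in which the jump probability, the entry probability and the exit probability are all equal to $\varepsilon$.
   Context: Cross Model: $\mathbb{Z}_K=\mathbb{Z}\times[\![-K,K]\!]$ with vertical edges $(i,j)\to(i,j+1)$ ($j\in[\![-K,K-1]\!]$), horizontal edges $(i,j)\to(i+1,j)$, and diagonal edges $(i,j)\to(i+1,j\pm1)$ (within the strip). Vertical and horizontal edges have length $1$, diagonal edges length $2$. All vertical and diagonal edges are open; each horizontal edge is open with probability $1-\varepsilon$ and closed with probability $\varepsilon$, independently. For $i\ge0$, $j\in[\![-K,K]\!]$, $D^{K,d}(i,j)$ is the length of a shortest path of open edges in $\mathbb{Z}_K$ from $(0,0)$ to $(i,j)$, and $\mathbf{D}^{K,d}_i=(D^{K,d}(i,j))_{j\in[\![-K,K]\!]}$. Define $\mathbf{Y}_i=(Y_i^j)_{j\in[\![-K+1,K]\!]}\in\{\bullet,\circ\}^{2K}$ by $Y_i^j=\bullet$ if $D^{K,d}(i,j)=D^{K,d}(i,j-1)-1$ and $Y_i^j=\circ$ if $D^{K,d}(i,j)=D^{K,d}(i,j-1)+1$ (one of these always holds); site $j$ is occupied by a particle at time $i$ iff $Y_i^j=\bullet$. The synchronous TASEP on $[\![-K+1,K]\!]$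 with jump, entry and exit probability $\varepsilon$ is the Markov chain on $\{\bullet,\circ\}^{2K}$ where, from time $t$ to $t+1$, independently: each particle at $j\in[\![-K+1,K-1]\!]$ such that site $j+1$ is empty at time $t$ moves to $j+1$ with probability $\varepsilon$; if site $-K+1$ is empty at time $t$, a particle enters there with probability $\varepsilon$; if site $K$ is occupied at time $t$, its particle exits with probability $\varepsilon$. *)

From HB Require Import structures.
From mathcomp Require Import all_boot all_order all_algebra.
From mathcomp Require Import all_classical all_reals all_analysis.
Set Implicit Arguments. Unset Strict Implicit. Unset Printing Implicit Defensive.
Import Order.TTheory GRing.Theory Num.Theory.
Local Open Scope classical_set_scope.
Local Open Scope ring_scope.

Definition vertex := (int * int)%type.

Definition in_strip (K : nat) (v : vertex) : Prop :=
  (- (K%:Z) <= v.2) /\ (v.2 <= K%:Z).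

(* [step K op u v l] : {u,v} is an OPEN edge of length l of Z_K, where
   [op i j] means that the horizontal edge (i,j)--(i+1,j) is open. *)
Definition step (K : nat) (op : int -> int -> Prop) (u v : vertex) (l : nat) : Prop :=
  in_strip K u /\ in_strip K v /\
  [\/ (u.1 = v.1 /\ `|u.2 - v.2| = 1 /\ l = 1%N),
      (u.2 = v.2 /\ `|u.1 - v.1| = 1 /\ op (Num.min u.1 v.1) u.2 /\ l = 1%N)
    | (`|u.1 - v.1| = 1 /\ `|u.2 - v.2| = 1 /\ l = 2%N)].

Inductive walk (K : nat) (op : int -> int -> Prop) : vertex -> vertex -> nat -> Prop :=
| walk_nil u : in_strip K u -> walk K op u u 0
| walk_cons u w v l n : step K op u w l -> walk K op w v n -> walk K op u v (l + n).

Definition is_dist (K : nat) (op : int -> int -> Prop) (u v : vertex) (n : nat) : Prop :=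
  walk K op u v n /\ forall m, walk K op u v m -> (n <= m)%N.

Definition row (K : nat) (k : 'I_(K.*2.+1)) : int := k%:Z - K%:Z.
Definition site (K : nat) (k : 'I_(K.*2)) : int := k%:Z - K%:Z + 1.

Definition Dstate (K : nat) := {ffun 'I_(K.*2.+1) -> nat}.
(* true = occupied (bullet), false = empty (circle) *)
Definition Ystate (K : nat) := {ffun 'I_(K.*2) -> bool}.

(* Y^j = bullet iff D(i,j) = D(i,j-1) - 1; site k (j = k-K+1) uses rows
   lift ord0 k (j) and widen k (j-1). *)
Definition Y_of (K : nat) (x : Dstate K) : Ystate K :=
  [ffun k : 'I_(K.*2) => ((x (lift ord0 k)).+1 == x (widen_ord (leqnSn _) k))%N].

Section Events.
Context {T : Type} (K : nat) (H : int -> int -> set T).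
(* H i j = event that the horizontal edge (i,j)--(i+1,j) is open *)

Definition D_event (i : nat) (x : Dstate K) : set T :=
  [set t | forall k : 'I_(K.*2.+1),
     is_dist K (fun a b => H a b t) (0, 0) (i%:Z, row k) (x k)].

Definition Y_event (i : nat) (y : Ystate K) : set T :=
  [set t | exists x : Dstate K, D_event i x t /\ Y_of x = y].
End Events.

(* [E i s] is the event {X_i = s}. *)
Definition markov_with {d} {T : measurableType d} {R : realType}
  (P : probability T R) {S : Type} (E : nat -> S -> set T) (Q : S -> S -> R) : Prop :=
  forall (n : nat) (x : nat -> S),
    P [set t | forall k, (k <= n.+1)%N -> E k (x k) t] =
    (P [set t | forall k, (k <= n)%N -> E k (x k) t] * (Q (x n) (x n.+1))%:E)%E.

Definition is_markov {d} {T : measurableType d} {R : realType}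
  (P : probability T R) {S : Type} (E : nat -> S -> set T) : Prop :=
  exists Q : S -> S -> R, markov_with P E Q.

(* Extended configuration on positions m = 0 .. 2K+1: position 0 is a virtual
   always-occupied reservoir (left of site -K+1), position m (1<=m<=2K) is
   site index m-1, position 2K+1 is a virtual always-empty sink (right of K).
   Bond b : 'I_(2K+1) joins positions b and b+1: bond 0 = entry,
   bond 2K = exit, other bonds = jumps between neighbouring sites. *)
Definition ext (K : nat) (y : Ystate K) (m : nat) : bool :=
  if m == 0%N then true
  else if (m <= K.*2)%N then
    (if insub m.-1 is Some k then y k else false)
  else false.

Definition active (K : nat) (y : Ystate K) : {set 'I_(K.*2.+1)} :=
  [set b : 'I_(K.*2.+1) | ext y b && ~~ ext y b.+1].

Definition apply_moves (K : nat) (y : Ystate K) (S : {set 'I_(K.*2.+1)}) : Ystate K :=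
  [ffun k : 'I_(K.*2) =>
     (y k && (lift ord0 k \notin S)) || (widen_ord (leqnSn _) k \in S)].

(* each possible move (jump / entry / exit) happens independently with prob. eps *)
Definition tasep_kernel {R : realType} (K : nat) (eps : R) (y y' : Ystate K) : R :=
  \sum_(S : {set 'I_(K.*2.+1)} | (S \subset active y) && (apply_moves y S == y'))
     eps ^+ #|S| * (1 - eps) ^+ (#|active y| - #|S|).

From Pilot Require Import Defs.
From HB Require Import structures.
From mathcomp Require Import all_boot all_order all_algebra.
From mathcomp Require Import all_classical all_reals all_analysis.
From mathcomp Require Import zify ring.
Set Implicit Arguments. Unset Strict Implicit. Unset Printing Implicit Defensive.
Import Order.TTheory GRing.Theory Num.Theory.
Local Open Scope classical_set_scope.
Local Open Scope ring_scope.

(** Let D_i be the column i of distances.  Since D_i(j) = D_i(j-1) +- 1,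
every row j either has a
neighbour j' with D_i(j') = D_i(j) - 1, and then D_(i+1)(j) = D_i(j) + 1
through a diagonal edge, or is a local minimum of D_i, and then
D_(i+1)(j) = D_i(j) + 1 if the horizontal edge (i,j)--(i+1,j) is open and
D_i(j) + 3 otherwise.  Hence D_(i+1) is a deterministic function of D_i and
of the column i of horizontal edges, which is independent of the past, so
(D_i) is a Markov chain.  In particle language the local minima of D_i are
exactly the particles followed by a hole (with a reservoir on the left and a
sink on the right), and a closed horizontal edge at such a row moves the
particle one step to the right: this is the synchronous TASEP.
That the recursively defined profile is the distance is shown by extending
it to a potential on the whole strip which increases by at most l along
every open edge of length l. *)

Section Profile.
Variable K : nat.

Definition xrow (x : Dstate K) (m : nat) : nat := x (inord m).

Lemma xrowE (x : Dstate K) (k : 'I_(K.*2.+1)) m : k = m :> nat -> x k = xrow x m.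
Proof. by move=> <-; rewrite /xrow inord_val. Qed.

Lemma Y_ofE (x : Dstate K) (k : 'I_(K.*2)) : Y_of x k = ((xrow x k.+1).+1 == xrow x k).
Proof.
by rewrite ffunE (@xrowE x (lift ord0 k) k.+1) ?(@xrowE x (widen_ord _ k) k) //= /bump /= add1n.
Qed.

Lemma ext_Y_of (x : Dstate K) m : (0 < m <= K.*2)%N ->
  ext (Y_of x) m = ((xrow x m).+1 == xrow x m.-1).
Proof.
move=> /andP[m_gt0 m_le]; rewrite /ext (gtn_eqF m_gt0) m_le.
case: insubP => [k _ km|]; first by rewrite Y_ofE km prednK.
by move=> /negP; lia.
Qed.

Lemma ext_out (y : Ystate K) m : (K.*2 < m)%N -> ext y m = false.
Proof. by move=> h; rewrite /ext leqNgt h; case: eqP => // m0; rewrite m0 in h. Qed.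

Definition activen (x : Dstate K) (m : nat) := (inord m : 'I_(K.*2.+1)) \in active (Y_of x).

Lemma activenE (x : Dstate K) m : (m <= K.*2)%N ->
  activen x m = ((m == 0%N) || ((xrow x m).+1 == xrow x m.-1)) &&
                ((K.*2 <= m)%N || ((xrow x m.+1).+1 != xrow x m)).
Proof.
move=> m_le; rewrite /activen inE inordK ?ltnS //; congr (_ && _).
  by case: (posnP m) => [->|m_gt0] //=; rewrite ext_Y_of // m_gt0.
case: (leqP (K.*2) m) => h /=; first by rewrite ext_out.
by rewrite ext_Y_of.
Qed.

Definition slope1 (x : Dstate K) := forall m, (m < K.*2)%N ->
  xrow x m.+1 = (xrow x m).+1 \/ xrow x m = (xrow x m.+1).+1.

Lemma active_local_min (x : Dstate K) m : slope1 x -> (m <= K.*2)%N -> activen x m ->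
  ((0 < m)%N -> xrow x m.-1 = (xrow x m).+1) /\
  ((m < K.*2)%N -> xrow x m.+1 = (xrow x m).+1).
Proof.
move=> x1 m_le; rewrite activenE // => /andP[left_up right_up]; split => hm.
  by move: left_up; rewrite (gtn_eqF hm) => /eqP.
by move: right_up; rewrite leqNgt hm /=; case: (x1 m hm) => // ->; rewrite eqxx.
Qed.

Lemma inactive_lower_neighbour (x : Dstate K) m : slope1 x -> (m <= K.*2)%N ->
  ~~ activen x m ->
  ((0 < m)%N /\ (xrow x m.-1).+1 = xrow x m) \/
  ((m < K.*2)%N /\ (xrow x m.+1).+1 = xrow x m).
Proof.
move=> x1 m_le; rewrite activenE // negb_and => /orP[].
  rewrite negb_or -lt0n => /andP[m_gt0 left_down]; left; split => //.
  by move: left_down; have := x1 m.-1; rewrite prednK // => /(_ m_le) [] ->; rewrite ?eqxx.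
by rewrite negb_or negbK -ltnNge => /andP[hm /eqP right_down]; right.
Qed.

(* [c k] tells whether the horizontal edge leaving row [k] is open. *)
Definition grow (x : Dstate K) (c : {ffun 'I_(K.*2.+1) -> bool}) : Dstate K :=
  [ffun k => (x k + (if (k \in active (Y_of x)) && ~~ c k then 3 else 1))%N].

Lemma growE x c m :
  xrow (grow x c) m = (xrow x m + (if activen x m && ~~ c (inord m) then 3 else 1))%N.
Proof. by rewrite /xrow ffunE. Qed.

Lemma slope1_grow x c : slope1 x -> slope1 (grow x c).
Proof.
move=> x1 m hm; rewrite !growE.
case: (x1 m hm) => h.
  have /negbTE -> : ~~ activen x m.+1.
    by apply/negP => /(active_local_min x1 hm) [/(_ isT) /= + _]; lia.
  by rewrite /=; case: ifP => _; lia.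
have /negbTE -> : ~~ activen x m.
  by apply/negP => /(active_local_min x1 (ltnW hm)) [_ /(_ hm)]; lia.
by rewrite /=; case: ifP => _; lia.
Qed.

Definition profile0 : Dstate K := [ffun k => `|Defs.row k|%N].

Lemma profile0E m : (m <= K.*2)%N -> xrow profile0 m = `|m%:Z - K%:Z|%N.
Proof. by move=> m_le; rewrite /xrow ffunE /Defs.row inordK. Qed.

Lemma slope1_profile0 : slope1 profile0.
Proof. by move=> m hm; rewrite !profile0E //; [lia | exact: ltnW]. Qed.

Fixpoint profile (col : nat -> {ffun 'I_(K.*2.+1) -> bool}) (i : nat) : Dstate K :=
  if i is i'.+1 then grow (profile col i') (col i') else profile0.

Lemma slope1_profile col i : slope1 (profile col i).
Proof. by elim: i => [|i IH] /=; [exact: slope1_profile0 | exact: slope1_grow]. Qed.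

Lemma profile_ext (col col' : nat -> {ffun 'I_(K.*2.+1) -> bool}) k :
  (forall i, (i < k)%N -> col i = col' i) -> profile col k = profile col' k.
Proof.
elim: k => [|k IH] eq_col //=.
by rewrite IH ?eq_col // => i hi; apply: eq_col; exact: ltnW.
Qed.

Lemma Y_of_grow (x : Dstate K) c : slope1 x ->
  Y_of (grow x c) = apply_moves (Y_of x) (active (Y_of x) :&: [set k | ~~ c k]).
Proof.
move=> x1; apply/ffunP => k; rewrite Y_ofE [RHS]ffunE.
have hk : (k < K.*2)%N := ltn_ord k.
rewrite !growE.
have -> : lift ord0 k = inord k.+1 :> 'I_(K.*2.+1).
  by apply: val_inj; rewrite /= inordK // /bump /= add1n.
have -> : widen_ord (leqnSn _) k = inord k :> 'I_(K.*2.+1).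
  by apply: val_inj; rewrite /= inordK // ltnW.
rewrite !finset.in_setI -/(activen x k.+1) -/(activen x k) !finset.in_set Y_ofE.
case: (x1 k hk) => h.
  have /negbTE -> : ~~ activen x k.+1.
    by apply/negP => /(active_local_min x1 hk) [/(_ isT) /= + _]; lia.
  have -> : ((xrow x k.+1).+1 == xrow x k) = false by apply/eqP; lia.
  by case: (activen x k && _) => /=; [apply/eqP; lia | apply/eqP => ?; lia].
have /negbTE -> : ~~ activen x k.
  by apply/negP => /(active_local_min x1 (ltnW hk)) [_ /(_ hk)]; lia.
have -> : ((xrow x k.+1).+1 == xrow x k) = true by apply/eqP; lia.
rewrite orbF.
by case: (activen x k.+1 && _) => /=; [apply/eqP => ?; lia | apply/eqP; lia].
Qed.

End Profile.

Section Distances.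
Variable K : nat.
Hypothesis hK : (1 <= K)%N.
Variable op : int -> int -> Prop.

Definition open_column (i : nat) : {ffun 'I_(K.*2.+1) -> bool} :=
  [ffun k => `[< op i%:Z (Defs.row k) >]].

Definition dprof i m := xrow (profile open_column i) m.

Lemma walk_snoc u w v n l : walk K op u w n -> step K op w v l -> walk K op u v (n + l).
Proof.
elim=> [x sx | x y z l' n' s _ IH] st.
  by have [_ [sv _]] := st; rewrite add0n -[l]addn0; exact: walk_cons st (walk_nil op sv).
by rewrite -addnA; exact: walk_cons s (IH st).
Qed.

Lemma step_vert a j j' : - (K%:Z) <= j <= K%:Z -> - (K%:Z) <= j' <= K%:Z ->
  `|j - j'| = 1 -> step K op (a, j) (a, j') 1.
Proof. by move=> /andP[? ?] /andP[? ?] ?; do 2 split => //; exact: Or31. Qed.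

Lemma step_horiz a j : - (K%:Z) <= j <= K%:Z -> op a j -> step K op (a, j) (a + 1, j) 1.
Proof.
move=> /andP[? ?] o; do 2 split => //; apply: Or32 => /=.
rewrite (_ : Num.min a (a + 1) = a); last by lia.
by split => //; split; [lia | split].
Qed.

Lemma step_diag a j j' : - (K%:Z) <= j <= K%:Z -> - (K%:Z) <= j' <= K%:Z ->
  `|j - j'| = 1 -> step K op (a, j) (a + 1, j') 2.
Proof. by move=> /andP[? ?] /andP[? ?] ?; do 2 split => //; apply: Or33 => /=; split; lia. Qed.

Lemma walk_origin_up n : (n <= K)%N ->
  walk K op (0, 0) (0, n%:Z) n /\ walk K op (0, 0) (0, - n%:Z) n.
Proof.
elim: n => [|n IH] hn.
  by rewrite oppr0; have w : walk K op (0, 0) (0, 0) 0 by apply: walk_nil; split => /=; lia.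
have [w1 w2] := IH (ltnW hn).
by split; rewrite -addn1; [apply: walk_snoc w1 _ | apply: walk_snoc w2 _]; apply: step_vert; lia.
Qed.

Lemma walk_origin_column j : - (K%:Z) <= j <= K%:Z -> walk K op (0, 0) (0, j) `|j|%N.
Proof.
move=> hj; have [w1 w2] := walk_origin_up (n := `|j|%N) ltac:(lia).
case: (lerP 0 j) => j0; [move: w1 | move: w2].
  by rewrite (_ : (`|j|%N)%:Z = j) //; lia.
by rewrite (_ : - (`|j|%N)%:Z = j) //; lia.
Qed.

Lemma dprof0 m : (m <= K.*2)%N -> dprof 0 m = `|m%:Z - K%:Z|%N.
Proof. exact: profile0E. Qed.

Lemma dprofS i m : (m <= K.*2)%N -> dprof i.+1 m =
  (dprof i m + (if activen (profile open_column i) m && ~~ `[< op i%:Z (m%:Z - K%:Z) >]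
               then 3 else 1))%N.
Proof. by move=> m_le; rewrite /dprof /= growE ffunE /Defs.row inordK. Qed.

Lemma walk_dprof i m : (m <= K.*2)%N -> walk K op (0, 0) (i%:Z, m%:Z - K%:Z) (dprof i m).
Proof.
elim: i m => [|i IH] m m_le; first by rewrite dprof0 //; apply: walk_origin_column; lia.
have -> : (i.+1)%:Z = i%:Z + 1 by lia.
rewrite dprofS //; set x := profile open_column i.
have x1 : slope1 x := slope1_profile open_column i.
case: (asboolP (op i%:Z (m%:Z - K%:Z))) => o /=; rewrite ?andbF ?andbT.
  by apply: walk_snoc (IH m m_le) (step_horiz _ o); lia.
case act : (activen x m).
  have [up_left up_right] := active_local_min x1 m_le act.
  have [m' [m'_le xm' adj]] : exists m', [/\ (m' <= K.*2)%N, xrow x m' = (xrow x m).+1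
    & (m' = m.+1 \/ m = m'.+1)].
    case: (posnP m) => m0; first by exists m.+1; split; [lia | apply: up_right; lia | left].
    by exists m.-1; split; [lia | exact: up_left | right; lia].
  rewrite (_ : (_ + 3 = dprof i m + 1 + 2)%N); last by lia.
  apply: (walk_snoc (w := (i%:Z, m'%:Z - K%:Z))); last by apply: step_diag; lia.
  by apply: walk_snoc (IH m m_le) _; apply: step_vert; lia.
have [[m_gt0 lower]|[m_lt lower]] := inactive_lower_neighbour x1 m_le (negbT act).
  rewrite (_ : (_ + 1 = dprof i m.-1 + 2)%N); last by rewrite /dprof -/x -lower; lia.
  by apply: walk_snoc (IH m.-1 ltac:(lia)) _; apply: step_diag; lia.
rewrite (_ : (_ + 1 = dprof i m.+1 + 2)%N); last by rewrite /dprof -/x -lower; lia.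
by apply: walk_snoc (IH m.+1 m_lt) _; apply: step_diag; lia.
Qed.

Lemma dprof_ltS i m : (m <= K.*2)%N -> (dprof i m < dprof i.+1 m)%N.
Proof. by move=> m_le; rewrite dprofS //; case: ifP => _; lia. Qed.

Lemma dprof_adj i m m' : (m' = m.+1 \/ m = m'.+1) -> (m <= K.*2)%N -> (m' <= K.*2)%N ->
  (dprof i m' <= (dprof i m).+1)%N.
Proof.
have x1 := slope1_profile open_column i.
by case=> -> *; [have := x1 m | have := x1 m']; rewrite /dprof; lia.
Qed.

Lemma dprof_open i m : (m <= K.*2)%N -> op i%:Z (m%:Z - K%:Z) -> dprof i.+1 m = (dprof i m).+1.
Proof.
by move=> m_le o; rewrite dprofS //; case: asboolP => // _; rewrite andbF addn1.
Qed.

Lemma dprof_diag i m m' : (m' = m.+1 \/ m = m'.+1) -> (m <= K.*2)%N -> (m' <= K.*2)%N ->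
  (dprof i.+1 m' <= dprof i m + 2)%N.
Proof.
move=> adj m_le m'_le; rewrite dprofS //.
have := dprof_adj i adj m_le m'_le.
case act: (activen _ m') => /=; last by lia.
have [up_left up_right] := active_local_min (slope1_profile open_column i) m'_le act.
by case: adj => e; [have := up_left ltac:(lia) | have := up_right ltac:(lia)];
  rewrite e /= /dprof; case: ifP => _; lia.
Qed.

(* On the columns [a < 0], which walks may visit, the l1 norm serves as potential. *)
Definition potential (v : vertex) : nat :=
  if ((0 <= v.1) && (- (K%:Z) <= v.2 <= K%:Z))%R then dprof `|v.1|%N (absz (v.2 + K%:Z))
  else (`|v.1|%N + `|v.2|%N)%N.

Lemma potentialE a j : - (K%:Z) <= j <= K%:Z ->
  potential (a, j) = if 0 <= a then dprof `|a|%N (absz (j + K%:Z)) else (`|a|%N + `|j|%N)%N.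
Proof. by move=> hj; rewrite /potential /= hj andbT. Qed.

Lemma potential_vert a j j' : - (K%:Z) <= j <= K%:Z -> - (K%:Z) <= j' <= K%:Z ->
  `|j - j'| = 1 -> (potential (a, j') <= potential (a, j) + 1)%N.
Proof.
move=> hj hj' jj; rewrite !potentialE //; case: (lerP 0 a) => a0; last by lia.
by rewrite addn1; apply: dprof_adj; lia.
Qed.

Lemma potential_horiz a a' j : - (K%:Z) <= j <= K%:Z -> `|a - a'| = 1 ->
  op (Num.min a a') j -> (potential (a', j) <= potential (a, j) + 1)%N.
Proof.
move=> hj aa hop; rewrite !potentialE //.
set m := absz (j + K%:Z).
have m_le : (m <= K.*2)%N by rewrite /m; lia.
have d0 : dprof 0 m = `|j|%N by rewrite dprof0 // /m; lia.
case: (ltrP a a') => aa'.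
  case: (lerP 0 a) => a0; last first.
    case: (lerP 0 a') => a'0; last by lia.
    by rewrite (_ : a' = 0) ?absz0 ?d0; lia.
  have a'0 : 0 <= a' by lia.
  have -> : `|a'|%N = (`|a|%N).+1 by lia.
  rewrite !ifT // addn1; apply/eq_leq/dprof_open => //.
  have -> : (`|a|%N)%:Z = Num.min a a' by lia.
  by rewrite (_ : m%:Z - K%:Z = j) // /m; lia.
case: (lerP 0 a') => a'0; last first.
  case: (lerP 0 a) => a0; last by lia.
  by rewrite (_ : a = 0) ?absz0 ?d0; lia.
have a0 : 0 <= a by lia.
have -> : `|a|%N = (`|a'|%N).+1 by lia.
by rewrite !ifT //; have := dprof_ltS `|a'|%N m_le; lia.
Qed.

Lemma potential_diag a a' j j' : - (K%:Z) <= j <= K%:Z -> - (K%:Z) <= j' <= K%:Z ->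
  `|a - a'| = 1 -> `|j - j'| = 1 -> (potential (a', j') <= potential (a, j) + 2)%N.
Proof.
move=> hj hj' aa jj; rewrite !potentialE //.
set m := absz (j + K%:Z); set m' := absz (j' + K%:Z).
have m_le : (m <= K.*2)%N by rewrite /m; lia.
have m'_le : (m' <= K.*2)%N by rewrite /m'; lia.
have d0 : dprof 0 m = `|j|%N by rewrite dprof0 // /m; lia.
have d0' : dprof 0 m' = `|j'|%N by rewrite dprof0 // /m'; lia.
have mm : m' = m.+1 \/ m = m'.+1 by rewrite /m /m'; lia.
case: (ltrP a a') => aa'.
  case: (lerP 0 a) => a0; last first.
    case: (lerP 0 a') => a'0; last by lia.
    by rewrite (_ : a' = 0) ?absz0 ?d0'; lia.
  have a'0 : 0 <= a' by lia.
  have -> : `|a'|%N = (`|a|%N).+1 by lia.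
  by rewrite !ifT //; apply: dprof_diag.
case: (lerP 0 a') => a'0; last first.
  case: (lerP 0 a) => a0; last by lia.
  by rewrite (_ : a = 0) ?absz0 ?d0; lia.
have a0 : 0 <= a by lia.
have -> : `|a|%N = (`|a'|%N).+1 by lia.
rewrite !ifT //; have := dprof_ltS `|a'|%N m_le.
by have := dprof_adj `|a'|%N mm m_le m'_le; lia.
Qed.

Lemma potential_step u v l : step K op u v l -> (potential v <= potential u + l)%N.
Proof.
case: u v => a j [a' j'] [[ja jb] [[ja' jb'] edge]]; rewrite /= in ja jb ja' jb' edge.
have hj : - (K%:Z) <= j <= K%:Z by apply/andP.
have hj' : - (K%:Z) <= j' <= K%:Z by apply/andP.
case: edge => [[<- [jj ->]] | [<- [aa [hop ->]]] | [aa [jj ->]]].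
- exact: potential_vert.
- exact: potential_horiz.
- exact: potential_diag.
Qed.

Lemma potential_walk u v n : walk K op u v n -> (potential v <= potential u + n)%N.
Proof.
elim=> [x _ | x y z l n' s _ IH]; first by rewrite addn0.
by have := potential_step s; lia.
Qed.

Lemma potential_nat (i : nat) j : - (K%:Z) <= j <= K%:Z ->
  potential (i%:Z, j) = dprof i (absz (j + K%:Z)).
Proof. by move=> hj; rewrite /potential /= hj. Qed.

Lemma profile_is_dist i (k : 'I_(K.*2.+1)) :
  is_dist K op (0, 0) (i%:Z, Defs.row k) (profile open_column i k).
Proof.
have k_le : (k <= K.*2)%N by rewrite -ltnS.
rewrite (xrowE _ (erefl (k : nat))) -/(dprof i k); split; first exact: walk_dprof.
move=> n /potential_walk; rewrite (potential_nat 0) ?potential_nat /Defs.row; try lia.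
by rewrite subrK add0r dprof0 ?subrr // -addnn leq_addr.
Qed.

End Distances.

Section Weights.
Variables (R : realType) (eps : R).

(* [c i = true] means that edge [i] is open, which has probability [1 - eps]. *)
Definition bweight (b : bool) : R := if b then 1 - eps else eps.

Definition cweight (F : finType) (c : {ffun F -> bool}) : R := \prod_i bweight (c i).

Lemma sum_cweight (F : finType) : \sum_(c : {ffun F -> bool}) cweight c = 1.
Proof.
rewrite /cweight -(bigA_distr_bigA (fun (_ : F) (b : bool) => bweight b)) /=.
by apply: big1 => i _; rewrite big_bool /= subrK.
Qed.

(* The probability that, among the edges of [A], exactly those of [S] are closed. *)
Lemma sum_cweight_closed_in (F : finType) (A S : {set F}) : S \subset A ->
  \sum_(c : {ffun F -> bool}) (if A :&: [set k | ~~ c k] == S then cweight c else 0)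
  = eps ^+ #|S| * (1 - eps) ^+ (#|A| - #|S|).
Proof.
move=> SA.
pose f i (b : bool) := if (i \in A) && (~~ b != (i \in S)) then 0 else bweight b.
transitivity (\sum_(c : {ffun F -> bool}) \prod_i f i (c i)).
  apply: eq_bigr => c _; case: eqP => [cS|cS].
    by apply: eq_bigr => i _; rewrite /f -cS !inE; case: (i \in A); rewrite ?eqxx.
  case: (boolP [exists i, (i \in A) && (~~ c i != (i \in S))]).
    by case/existsP => i fi0; rewrite (bigD1 i) //= /f fi0 mul0r.
  rewrite negb_exists => /forallP cS'; case: cS; apply/finset.setP => i; rewrite !inE.
  have := cS' i; case: (boolP (i \in A)) => [_ /negPn /eqP //|iA _].
  by apply/esym/negP => /(fintype.subsetP SA); rewrite (negbTE iA).
rewrite -(bigA_distr_bigA f) /=.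
rewrite (eq_bigr (fun i => if i \in S then eps else if i \in A then 1 - eps else 1)); last first.
  move=> i _; rewrite big_bool /f /=.
  case: (boolP (i \in S)) => iS; first by rewrite (fintype.subsetP SA _ iS) /= add0r.
  by case: (i \in A); rewrite /= ?addr0 // subrK.
rewrite (bigID (mem S)) /= (eq_bigr (fun _ => eps)) => [|i -> //].
rewrite prodr_const; congr (_ * _).
rewrite (eq_bigr (fun i => if i \in A then 1 - eps else 1)) => [|i /negbTE -> //].
rewrite -big_mkcondr /= (eq_bigl (mem (A :\: S))) => [|i]; last by rewrite !inE andbC.
by rewrite prodr_const cardsD (finset.setIidPr SA).
Qed.

End Weights.

Lemma tasep_kernelE (R : realType) (eps : R) K (x : Dstate K) (y' : Ystate K) :
  slope1 x ->
  \sum_(c : {ffun 'I_(K.*2.+1) -> bool}) (if Y_of (grow x c) == y' then cweight eps c else 0)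
  = tasep_kernel eps (Y_of x) y'.
Proof.
move=> x1; rewrite /tasep_kernel.
rewrite (eq_bigr (fun S => \sum_(c : {ffun 'I_(K.*2.+1) -> bool})
   (if active (Y_of x) :&: [set k | ~~ c k] == S then cweight eps c else 0))); last first.
  by move=> S /andP[SA _]; rewrite sum_cweight_closed_in.
rewrite exchange_big /=; apply: eq_bigr => c _.
rewrite Y_of_grow //; set S0 := active (Y_of x) :&: _.
case: (boolP (apply_moves (Y_of x) S0 == y')) => moved.
  rewrite (bigD1 S0) /=; last by rewrite finset.subsetIl moved.
  by rewrite eqxx big1 ?addr0 // => S /andP[_ /negbTE]; rewrite eq_sym => ->.
apply/esym/big1 => S /andP[_ moveS].
by case: eqP => // S0S; rewrite S0S moveS in moved.
Qed.

Lemma asbool_eqb (Q : Prop) (b : bool) : `[< Q >] = b <-> (Q <-> b).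
Proof.
split; first by move=> <-; split => [q|/asboolP //]; apply/asboolP.
by case: b => -[h1 h2]; apply/asboolP => //; [exact: h2 | move/h1].
Qed.

Section Cylinders.
Context d (T : measurableType d) (R : realType) (P : probability T R) (K : nat) (eps : R)
  (H : int -> int -> set T).
Hypothesis Hmeas : forall i j, measurable (H i j).
Hypothesis Hprob : forall i j, - (K%:Z) <= j <= K%:Z -> P (H i j) = (1 - eps)%:E.
Hypothesis Hindep : forall s : seq (int * int), uniq s ->
     (forall e, e \in s -> - (K%:Z) <= e.2 <= K%:Z) ->
     fine (P [set t | forall e, e \in s -> H e.1 e.2 t])
       = \prod_(e <- s) fine (P (H e.1 e.2)).

Definition all_open (p : seq (int * int)) : set T := [set t | forall e, e \in p -> H e.1 e.2 t].

Lemma measurable_all_open p : measurable (all_open p).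
Proof.
elim: p => [|e p IH].
  by rewrite (_ : all_open [::] = setT) //; apply/seteqP; split => t //= _ e; rewrite in_nil.
rewrite (_ : all_open (e :: p) = H e.1 e.2 `&` all_open p); first exact: measurableI.
apply/seteqP; split => t /=; last by move=> [He Hp] e'; rewrite in_cons => /orP[/eqP ->|/Hp].
by move=> h; split => [|e' pe']; apply: h; rewrite ?mem_head // in_cons pe' orbT.
Qed.

Definition cylinder (p : seq (int * int)) (s : seq ((int * int) * bool)) : set T :=
  [set t | (forall e, e \in p -> H e.1 e.2 t) /\
           (forall eb, eb \in s -> (H eb.1.1 eb.1.2 t <-> eb.2))].

Lemma cylinder_nil p : cylinder p [::] = all_open p.
Proof. by apply/seteqP; split => t /=; [case | split => // eb; rewrite in_nil]. Qed.

Lemma cylinder_cons p e b s : cylinder p ((e, b) :: s) =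
  cylinder p s `&` (if b then H e.1 e.2 else ~` H e.1 e.2).
Proof.
apply/seteqP; split => t /=.
  move=> [Hp Hs]; split; first by split => // eb seb; apply: Hs; rewrite in_cons seb orbT.
  by have /= := Hs (e, b) (mem_head _ _); case: b {Hs} => h; [exact/h | move=> /h].
move=> [[Hp Hs] He]; split => // eb; rewrite in_cons => /orP[/eqP -> /=|/Hs //].
by case: b He => He; split => // /He.
Qed.

Lemma measurable_cylinder p s : measurable (cylinder p s).
Proof.
elim: s => [|[e b] s IH]; first by rewrite cylinder_nil; exact: measurable_all_open.
by rewrite cylinder_cons; apply: measurableI => //; case: b => //; exact: measurableC.
Qed.

Lemma cylinder_open p e s : cylinder p ((e, true) :: s) = cylinder (e :: p) s.
Proof.
rewrite cylinder_cons; apply/seteqP; split => t /=.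
  by move=> [[Hp Hs] He]; split => // e'; rewrite in_cons => /orP[/eqP -> //|/Hp].
move=> [Hp Hs]; split; last by apply: Hp; rewrite mem_head.
by split => // e' pe'; apply: Hp; rewrite in_cons pe' orbT.
Qed.

Lemma cylinder_closed p e s :
  cylinder p ((e, false) :: s) = cylinder p s `\` cylinder (e :: p) s.
Proof.
rewrite cylinder_cons; apply/seteqP; split => t /=.
  by move=> [[Hp Hs] He]; split => // -[/(_ e (mem_head _ _))].
move=> [[Hp Hs] Hn]; split => // He; apply: Hn; split => // e'.
by rewrite in_cons => /orP[/eqP -> //|/Hp].
Qed.

Lemma measure_all_open p : uniq p -> (forall e, e \in p -> - (K%:Z) <= e.2 <= K%:Z) ->
  P (all_open p) = ((1 - eps) ^+ size p)%:E.
Proof.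
move=> Up Sp; rewrite -(fineK (fin_num_measure P _ (measurable_all_open p))) Hindep //.
congr EFin; elim: p {Up} Sp => [|e p IH] Sp; first by rewrite big_nil.
rewrite big_cons IH => [|e' pe']; last by apply: Sp; rewrite in_cons pe' orbT.
by rewrite Hprob ?exprS //; apply: Sp; rewrite mem_head.
Qed.

Lemma measure_cylinder p s : uniq (p ++ map fst s) ->
  (forall e, e \in p ++ map fst s -> - (K%:Z) <= e.2 <= K%:Z) ->
  P (cylinder p s) = ((1 - eps) ^+ size p * \prod_(eb <- s) bweight eps eb.2)%:E.
Proof.
elim: s p => [|[e b] s IH] p U S.
  rewrite cylinder_nil big_nil mulr1 measure_all_open //; first by rewrite cats0 in U.
  by move=> e pe; apply: S; rewrite cats0.
have U' : uniq ((e :: p) ++ map fst s) by move: U; rewrite /= -cat1s uniq_catCA.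
have S' e' : e' \in (e :: p) ++ map fst s -> - (K%:Z) <= e'.2 <= K%:Z.
  by move=> pe'; apply: S; move: pe'; rewrite /= !in_cons !mem_cat !in_cons orbCA.
case: b {U S}; first by rewrite cylinder_open IH // big_cons /= exprS mulrCA mulrA.
have U'' : uniq (p ++ map fst s) by move: U'; rewrite /= => /andP[].
have S'' e' : e' \in p ++ map fst s -> - (K%:Z) <= e'.2 <= K%:Z.
  by move=> pe'; apply: S'; rewrite /= in_cons pe' orbT.
rewrite cylinder_closed measureD ?ltey_eq ?fin_num_measure //; try exact: measurable_cylinder.
have -> : cylinder p s `&` cylinder (e :: p) s = cylinder (e :: p) s.
  by apply/setIidr => t [Hp Hs]; split => // e' pe'; apply: Hp; rewrite in_cons pe' orbT.
rewrite -[LHS]/(P (cylinder p s) - P (cylinder (e :: p) s))%E.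
rewrite IH // IH // -EFinB big_cons /= exprS /bweight; congr EFin; ring.
Qed.

Section PreimageSeq.
Variables (F : eqType) (f : T -> F).
Hypothesis mf : forall b, measurable [set t | f t = b].

Lemma preimage_seq_nil : [set t | f t \in ([::] : seq F)] = set0.
Proof. by apply/seteqP; split => t //=; rewrite in_nil. Qed.

Lemma preimage_seq_cons b r :
  [set t | f t \in b :: r] = [set t | f t = b] `|` [set t | f t \in r].
Proof.
apply/seteqP; split => t /=; rewrite in_cons; first by case/orP => [/eqP|]; [left | right].
by case=> [->|->]; rewrite ?eqxx ?orbT.
Qed.

Lemma measurable_preimage_seq (r : seq F) : measurable [set t | f t \in r].
Proof.
elim: r => [|b r IH]; first by rewrite preimage_seq_nil.
by rewrite preimage_seq_cons; exact: measurableU.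
Qed.

Lemma measure_preimage_seq (r : seq F) : uniq r ->
  P [set t | f t \in r] = \sum_(b <- r) P [set t | f t = b].
Proof.
elim: r => [|b r IH]; first by rewrite preimage_seq_nil measure0 big_nil.
move=> /= /andP[br Ur]; rewrite preimage_seq_cons measureU //; first by rewrite big_cons -IH.
  exact: measurable_preimage_seq.
by apply/seteqP; split => t //= [-> rt]; rewrite rt in br.
Qed.

End PreimageSeq.

Section Configurations.
Variables (E1 E2 : finType) (e1 : E1 -> int * int) (e2 : E2 -> int * int).
Hypothesis e_uniq : uniq (map e1 (enum E1) ++ map e2 (enum E2)).
Hypothesis e_strip : forall e, e \in map e1 (enum E1) ++ map e2 (enum E2) ->
  - (K%:Z) <= e.2 <= K%:Z.

Definition config1 (t : T) : {ffun E1 -> bool} := [ffun i => `[< H (e1 i).1 (e1 i).2 t >]].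
Definition config2 (t : T) : {ffun E2 -> bool} := [ffun i => `[< H (e2 i).1 (e2 i).2 t >]].

Lemma config_fiberE b1 b2 : [set t | (config1 t, config2 t) = (b1, b2)] =
  cylinder [::] ([seq (e1 i, b1 i) | i <- enum E1] ++ [seq (e2 i, b2 i) | i <- enum E2]).
Proof.
apply/seteqP; split => t /=.
  move=> [<- <-]; split => // eb; rewrite mem_cat => /orP[|] /mapP[i _ ->] /=;
    by rewrite ffunE; exact: (asbool_eqb _ _).1.
move=> [_ h]; congr pair; apply/ffunP => i; rewrite ffunE; apply/asbool_eqb.
  by apply: (h (e1 i, b1 i)); rewrite mem_cat map_f ?mem_enum.
by apply: (h (e2 i, b2 i)); rewrite mem_cat map_f ?mem_enum ?orbT.
Qed.

Lemma measure_config_fiber b1 b2 :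
  P [set t | (config1 t, config2 t) = (b1, b2)] = (cweight eps b1 * cweight eps b2)%:E.
Proof.
have edges : map fst ([seq (e1 i, b1 i) | i <- enum E1] ++ [seq (e2 i, b2 i) | i <- enum E2])
    = map e1 (enum E1) ++ map e2 (enum E2) by rewrite map_cat -!map_comp.
rewrite config_fiberE measure_cylinder ?edges // expr0 mul1r big_cat !big_map.
by rewrite /cweight -!enumT !big_enum.
Qed.

Lemma measure_configs (psi : {ffun E1 -> bool} -> {ffun E2 -> bool} -> bool) :
  P [set t | psi (config1 t) (config2 t)] =
  (\sum_b1 \sum_b2 (if psi b1 b2 then cweight eps b1 * cweight eps b2 else 0))%:E.
Proof.
pose f t := (config1 t, config2 t).
have mf b : measurable [set t | f t = b] by case: b => b1 b2; rewrite config_fiberE; exact: measurable_cylinder.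
have -> : [set t | psi (config1 t) (config2 t)] = [set t | f t \in enum [pred b | psi b.1 b.2]].
  by apply/seteqP; split => t /=; rewrite mem_enum inE.
rewrite measure_preimage_seq ?enum_uniq // big_enum /=.
rewrite (eq_bigr (fun b => (cweight eps b.1 * cweight eps b.2)%:E)) => [|[b1 b2] _]; last first.
  exact: measure_config_fiber.
by rewrite sumEFin pair_big /= big_mkcond; congr EFin; apply: eq_bigr => -[b1 b2] _; rewrite inE.
Qed.

(* The configuration of the edges [e2] is independent of that of the edges [e1]. *)
Lemma measure_configs_next (A : {ffun E1 -> bool} -> bool)
    (B : {ffun E1 -> bool} -> {ffun E2 -> bool} -> bool) (q : R) :
  (forall b1, A b1 -> \sum_b2 (if B b1 b2 then cweight eps b2 else 0) = q) ->
  P [set t | A (config1 t) && B (config1 t) (config2 t)] = (P [set t | A (config1 t)] * q%:E)%E.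
Proof.
move=> Bq; rewrite (measure_configs (fun b1 b2 => A b1 && B b1 b2)).
rewrite (measure_configs (fun b1 _ => A b1)) -EFinM big_distrl; congr EFin.
apply: eq_bigr => b1 _; case: (boolP (A b1)) => /= [Ab1|_]; last by rewrite !big1 ?mul0r.
rewrite -big_distrr /= sum_cweight mulr1 -(Bq _ Ab1) big_distrr /=.
by apply: eq_bigr => b2 _; case: ifP; rewrite ?mulr0.
Qed.

End Configurations.
End Cylinders.

Lemma forall_ordSP n (p : nat -> bool) :
  reflect (forall k, (k <= n)%N -> p k) [forall k : 'I_n.+1, p k].
Proof.
apply: (iffP forallP) => h k; last by apply: h; rewrite -ltnS.
by move=> kn; exact: h (@Ordinal n.+1 k kn).
Qed.

Section Chain.
Context d (T : measurableType d) (R : realType) (P : probability T R) (K : nat) (eps : R)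
  (H : int -> int -> set T).
Hypothesis hK : (1 <= K)%N.
Hypothesis Hmeas : forall i j, measurable (H i j).
Hypothesis Hprob : forall i j, - (K%:Z) <= j <= K%:Z -> P (H i j) = (1 - eps)%:E.
Hypothesis Hindep : forall s : seq (int * int), uniq s ->
     (forall e, e \in s -> - (K%:Z) <= e.2 <= K%:Z) ->
     fine (P [set t | forall e, e \in s -> H e.1 e.2 t])
       = \prod_(e <- s) fine (P (H e.1 e.2)).

Definition open_at (t : T) : int -> int -> Prop := fun a b => H a b t.

Definition distances (t : T) (i : nat) : Dstate K := profile (open_column K (open_at t)) i.

Lemma D_eventE : D_event H = fun i x => [set t | distances t i = x].
Proof.
apply/funext => i; apply/funext => x; apply/seteqP; split => t /=; last first.
  by move=> <- k; exact: profile_is_dist.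
move=> dist_x; apply/ffunP => k; have [walk_x min_x] := dist_x k.
have [walk_d min_d] := profile_is_dist hK (open_at t) i k.
by apply/eqP; rewrite eqn_leq min_x // min_d.
Qed.

Lemma Y_eventE : Y_event H = fun i y => [set t | Y_of (distances t i) = y].
Proof.
apply/funext => i; apply/funext => y; apply/seteqP; rewrite /Y_event D_eventE.
by split => t /=; [case=> x [<- <-] | move=> <-; exists (distances t i)].
Qed.

Lemma row_inj : injective (@Defs.row K).
Proof. by move=> a b; rewrite /Defs.row => ab; apply: ord_inj; lia. Qed.

Section Step.
Variable n : nat.

Definition past_edge (p : 'I_n * 'I_(K.*2.+1)) : int * int := ((p.1 : nat)%:Z, Defs.row p.2).
Definition next_edge (k : 'I_(K.*2.+1)) : int * int := (n%:Z, Defs.row k).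

Definition past_column (b : {ffun 'I_n * 'I_(K.*2.+1) -> bool}) (i : nat) :
  {ffun 'I_(K.*2.+1) -> bool} :=
  [ffun k => if insub i is Some i' then b (i', k) else false].

Lemma edges_uniq : uniq (map past_edge (enum {: 'I_n * 'I_(K.*2.+1)}) ++ map next_edge (enum 'I_(K.*2.+1))).
Proof.
rewrite cat_uniq; apply/and3P; split.
- rewrite map_inj_uniq ?enum_uniq // => -[a b] [a' b'] [aa' /row_inj ->].
  by congr pair; apply: ord_inj; lia.
- apply/hasPn => e /mapP[k _ ->]; apply/negP => /mapP[p _ [pn _]].
  by move: (ltn_ord p.1); rewrite -pn ltnn.
- by rewrite map_inj_uniq ?enum_uniq // => k k' [/row_inj].
Qed.

Lemma edges_in_strip e :
  e \in map past_edge (enum {: 'I_n * 'I_(K.*2.+1)}) ++ map next_edge (enum 'I_(K.*2.+1)) ->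
  - (K%:Z) <= e.2 <= K%:Z.
Proof.
rewrite mem_cat => /orP[/mapP[[a b] _ ->]|/mapP[k _ ->]]; rewrite /= /Defs.row.
  by have := ltn_ord b; lia.
by have := ltn_ord k; lia.
Qed.

Lemma distances_past t k : (k <= n)%N ->
  profile (past_column (config1 H past_edge t)) k = distances t k.
Proof.
move=> kn; apply: profile_ext => i ik; apply/ffunP => j; rewrite !ffunE.
by case: insubP => [i' _ i'i|]; [rewrite ffunE /past_edge /= i'i | rewrite (leq_trans ik)].
Qed.

Lemma distances_next t :
  distances t n.+1 = grow (profile (past_column (config1 H past_edge t)) n) (config2 H next_edge t).
Proof. by rewrite distances_past //; congr grow; apply/ffunP => k; rewrite !ffunE. Qed.

Definition past_agrees (S : eqType) (g : Dstate K -> S) (s : nat -> S)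
    (b : {ffun 'I_n * 'I_(K.*2.+1) -> bool}) :=
  [forall k : 'I_n.+1, g (profile (past_column b) k) == s k].

Lemma past_agreesP (S : eqType) (g : Dstate K -> S) (s : nat -> S) t :
  reflect (forall k, (k <= n)%N -> g (distances t k) = s k)
          (past_agrees g s (config1 H past_edge t)).
Proof.
apply: (iffP (forall_ordSP n (fun k => g (profile (past_column (config1 H past_edge t)) k) == s k)))
  => h k kn; first by have /eqP := h k kn; rewrite distances_past.
by rewrite distances_past // h.
Qed.

Lemma past_agrees_last (S : eqType) (g : Dstate K -> S) (s : nat -> S) b :
  past_agrees g s b -> g (profile (past_column b) n) = s n.
Proof. by move/forallP/(_ ord_max)/eqP. Qed.

End Step.

(* Both D and Y are observables [g] of the distance process. *)
Lemma markov_distances_observable (S : eqType) (g : Dstate K -> S) (Q : S -> S -> R) :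
  (forall x s', slope1 x ->
     \sum_c (if g (grow x c) == s' then cweight eps c else 0) = Q (g x) s') ->
  markov_with P (fun i s => [set t | g (distances t i) = s]) Q.
Proof.
move=> sumQ n s.
have -> : [set t | forall k, (k <= n)%N -> g (distances t k) = s k] =
          [set t | past_agrees g s (config1 H (@past_edge n) t)].
  by apply/seteqP; split => t /past_agreesP.
pose next b1 b2 := g (grow (profile (@past_column n b1) n) b2) == s n.+1.
have -> : [set t | forall k, (k <= n.+1)%N -> g (distances t k) = s k] =
          [set t | past_agrees g s (config1 H (@past_edge n) t) &&
                   next (config1 H (@past_edge n) t) (config2 H (next_edge n) t)].
  apply/seteqP; split => t h.
    by apply/andP; split; [apply/past_agreesP => k kn; apply: h; rewrite ltnW |
                           rewrite /next -distances_next h].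
  case/andP: h => /past_agreesP past /eqP next_s k; rewrite leq_eqVlt ltnS.
  by case/orP => [/eqP ->|/past //]; rewrite distances_next.
apply: (measure_configs_next Hmeas Hprob Hindep (edges_uniq n) (@edges_in_strip n)) => b1.
by move=> /past_agrees_last <-; apply: sumQ; exact: slope1_profile.
Qed.

End Chain.

Unset Implicit Arguments.

Theorem proposition3 (d : measure_display) (T : measurableType d) (R : realType)
  (P : probability T R) (K : nat) (eps : R)
  (H : int -> int -> set T)
  (hK : (1 <= K)%N) (heps0 : 0 < eps) (heps1 : eps < 1)
  (Hmeas : forall i j, measurable (H i j))
  (Hprob : forall i j, - (K%:Z) <= j <= K%:Z -> P (H i j) = (1 - eps)%:E)
  (Hindep : forall s : seq (int * int), uniq s ->
     (forall e, e \in s -> - (K%:Z) <= e.2 <= K%:Z) ->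
     fine (P [set t | forall e, e \in s -> H e.1 e.2 t])
       = \prod_(e <- s) fine (P (H e.1 e.2))) :
  is_markov P (@D_event T K H) /\
  markov_with P (@Y_event T K H) (@tasep_kernel R K eps).
Proof.
have markov_g := markov_distances_observable hK Hmeas Hprob Hindep.
split.
  exists (fun x x' => \sum_c (if grow x c == x' then cweight eps c else 0)).
  by rewrite D_eventE //; apply: (markov_g _ id).
rewrite Y_eventE //; apply: (markov_g _ (@Y_of K)) => x y' x1.
exact: tasep_kernelE.
Qed.
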